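(* Let $a<b$ and let $f,g:[a,b]\to\mathbb{R}$ be differentiable on $[a,b]$ (one-sided derivatives at the endpoints), and suppose $f$ and $g$ are twice differentiable at the point $a$ (from the right). Suppose $g(a)\neq g(b)$ and put $K=\frac{f(b)-f(a)}{g(b)-g(a)}$. If $$\bigl[f'(a)-K\,g'(a)\bigr]\cdot\bigl[f''(a)-K\,g''(a)\bigr]> 0,$$ then there exists $\eta\in(a,b)$ such that $$f'(\eta)-\frac{f(\eta)-f(a)}{\eta-a}=K\left[g'(\eta)-\frac{g(\eta)-g(a)}{\eta-a}\right].$$
   Context: Differentiability on a closed interval $[a,b]$ means differentiability on $(a,b)$ together with existence of the one-sided derivatives at $a$ and $b$. *)

From Stdlib Require Import Reals.
From Coquelicot Require Import Coquelicot.
Open Scope R_scope.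

Definition is_right_derive (f : R -> R) (x l : R) : Prop :=
  filterlim (fun h => (f (x + h) - f x) / h) (at_right 0) (locally l).

Definition is_left_derive (f : R -> R) (x l : R) : Prop :=
  filterlim (fun h => (f (x + h) - f x) / h) (at_left 0) (locally l).

Definition derive_on_closed (f f1 : R -> R) (a b : R) : Prop :=
  (forall x, a < x < b -> is_derive f x (f1 x)) /\
  is_right_derive f a (f1 a) /\
  is_left_derive f b (f1 b).

(* Put s := f'(a) - K g'(a) and h := s (f - K g).  Then h(a) = h(b), h'(a) = s^2 > 0
   and h''(a) > 0, and the claimed identity says that the secant slope
   phi(x) := (h(x) - h(a)) / (x - a) is critical at eta, because
   phi' = (h' - phi) / (x - a).  Now phi tends to h'(a) at a and vanishes at b,
   while convexity of h at a and the mean value theorem give a point where phi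
   exceeds h'(a) > 0; hence phi has an interior maximum. *)

From Stdlib Require Import Reals Lra.
From Coquelicot Require Import Coquelicot.
Open Scope R_scope.

Definition secant_slope (h : R -> R) (x y : R) : R := (h y - h x) / (y - x).

Section FilterlimR.

Context {T : Type} {F : (T -> Prop) -> Prop} {FF : Filter F}.

Lemma filterlim_Rplus (u v : T -> R) (lu lv : R) :
  filterlim u F (locally lu) -> filterlim v F (locally lv) ->
  filterlim (fun t => u t + v t) F (locally (lu + lv)).
Proof.
  intros Hu Hv.
  exact (filterlim_comp_2 _ _ _ Hu Hv (@filterlim_plus R_AbsRing R_NormedModule lu lv)).
Qed.

Lemma filterlim_Rmult (u v : T -> R) (lu lv : R) :
  filterlim u F (locally lu) -> filterlim v F (locally lv) ->
  filterlim (fun t => u t * v t) F (locally (lu * lv)).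
Proof.
  intros Hu Hv.
  exact (filterlim_comp_2 _ _ _ Hu Hv (@filterlim_mult R_AbsRing lu lv)).
Qed.

Lemma filterlim_eventually_pos (u : T -> R) (l : R) :
  filterlim u F (locally l) -> 0 < l -> F (fun t => 0 < u t).
Proof. intros Hu Hl. apply Hu. now apply open_gt. Qed.

Lemma filterlim_Rlincomb (u v : T -> R) (lu lv s k : R) :
  filterlim u F (locally lu) -> filterlim v F (locally lv) ->
  filterlim (fun t => s * (u t - k * v t)) F (locally (s * (lu - k * lv))).
Proof.
  intros Hu Hv.
  assert (Hc : forall c : R, filterlim (fun _ : T => c) F (locally c))
    by (intro; apply filterlim_const).
  apply filterlim_Rmult; [apply Hc|].
  replace (lu - k * lv) with (lu + (-1 * k) * lv) by ring.
  apply (filterlim_ext (fun t => u t + (-1 * k) * v t)); [intro; ring|].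
  apply filterlim_Rplus; [exact Hu|]. apply filterlim_Rmult; [apply Hc|exact Hv].
Qed.

End FilterlimR.

Lemma filterlim_shift_at_right (x : R) :
  filterlim (fun y => y - x) (at_right x) (at_right 0).
Proof.
  intros P [d Hd]. exists d. intros y Hy Hxy. apply Hd; [|lra].
  change (Rabs (y - x - 0) < d). rewrite Rminus_0_r. exact Hy.
Qed.

Lemma filterlim_shift_at_left (x : R) :
  filterlim (fun y => y - x) (at_left x) (at_left 0).
Proof.
  intros P [d Hd]. exists d. intros y Hy Hxy. apply Hd; [|lra].
  change (Rabs (y - x - 0) < d). rewrite Rminus_0_r. exact Hy.
Qed.

Lemma secant_slope_shift (h : R -> R) (x y : R) :
  secant_slope h x y = (h (x + (y - x)) - h x) / (y - x).
Proof. unfold secant_slope. now replace (x + (y - x)) with y by ring. Qed.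

Lemma is_right_derive_secant_slope (h : R -> R) (x l : R) :
  is_right_derive h x l -> filterlim (secant_slope h x) (at_right x) (locally l).
Proof.
  intro H. eapply filterlim_ext; [intro y; symmetry; apply secant_slope_shift|].
  exact (filterlim_comp _ _ _ _ _ _ _ _ (filterlim_shift_at_right x) H).
Qed.

Lemma is_left_derive_secant_slope (h : R -> R) (x l : R) :
  is_left_derive h x l -> filterlim (secant_slope h x) (at_left x) (locally l).
Proof.
  intro H. eapply filterlim_ext; [intro y; symmetry; apply secant_slope_shift|].
  exact (filterlim_comp _ _ _ _ _ _ _ _ (filterlim_shift_at_left x) H).
Qed.

Lemma filterlim_of_secant_slope (F : (R -> Prop) -> Prop) {FF : Filter F}
    (h : R -> R) (x l : R) :
  F (fun y => y <> x) -> filterlim (fun y => y) F (locally x) ->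
  filterlim (secant_slope h x) F (locally l) -> filterlim h F (locally (h x)).
Proof.
  intros Hne Hid Hs.
  apply (filterlim_ext_loc (fun y => h x + (y - x) * secant_slope h x y)).
  { eapply filter_imp; [|exact Hne]. intros y Hy. unfold secant_slope.
    field. lra. }
  assert (Hlim : filterlim (fun y => h x + (y - x) * secant_slope h x y) F
                  (locally (h x + (x + - x) * l))).
  { apply filterlim_Rplus; [apply filterlim_const|].
    apply filterlim_Rmult; [|exact Hs].
    apply filterlim_Rplus; [exact Hid|apply filterlim_const]. }
  now replace (h x + (x + - x) * l) with (h x) in Hlim by ring.
Qed.

Lemma is_right_derive_continuous (h : R -> R) (x l : R) :
  is_right_derive h x l -> filterlim h (at_right x) (locally (h x)).
Proof.
  intro H. apply (filterlim_of_secant_slope _ h x l).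
  - exists (mkposreal 1 Rlt_0_1). intros y _ Hy. lra.
  - intros P HP. now apply filter_le_within.
  - now apply is_right_derive_secant_slope.
Qed.

Lemma is_left_derive_continuous (h : R -> R) (x l : R) :
  is_left_derive h x l -> filterlim h (at_left x) (locally (h x)).
Proof.
  intro H. apply (filterlim_of_secant_slope _ h x l).
  - exists (mkposreal 1 Rlt_0_1). intros y _ Hy. lra.
  - intros P HP. now apply filter_le_within.
  - now apply is_left_derive_secant_slope.
Qed.

Lemma filterlim_secant_slope (F : (R -> Prop) -> Prop) {FF : Filter F}
    (h : R -> R) (x y : R) :
  y <> x -> filterlim (fun z => z) F (locally y) ->
  filterlim h F (locally (h y)) ->
  filterlim (secant_slope h x) F (locally (secant_slope h x y)).
Proof.
  intros Hyx Hid Hh. unfold secant_slope, Rdiv.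
  apply filterlim_Rmult.
  - apply filterlim_Rplus; [exact Hh|apply filterlim_const].
  - apply (filterlim_comp _ _ _ (fun z => z - x) Rinv F (locally (y - x))).
    + apply filterlim_Rplus; [exact Hid|apply filterlim_const].
    + apply (filterlim_Rbar_inv (y - x)). intro E. injection E. lra.
Qed.

Lemma is_derive_secant_slope (h : R -> R) (x y l : R) :
  y <> x -> is_derive h y l ->
  is_derive (secant_slope h x) y ((l - secant_slope h x y) / (y - x)).
Proof.
  intros Hyx Hd.
  assert (Dnum : is_derive (fun z => h z - h x) y (l - 0)).
  { apply (@is_derive_minus R_AbsRing R_NormedModule); [exact Hd|].
    apply (@is_derive_const R_AbsRing R_NormedModule). }
  assert (Dden : is_derive (fun z => z - x) y (1 - 0)).
  { apply (@is_derive_minus R_AbsRing R_NormedModule).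
    - apply (@is_derive_id R_AbsRing).
    - apply (@is_derive_const R_AbsRing R_NormedModule). }
  replace ((l - secant_slope h x y) / (y - x))
    with (((l - 0) * (y - x) - (h y - h x) * (1 - 0)) / (y - x) ^ 2)
    by (unfold secant_slope; field; lra).
  apply (is_derive_div _ _ y _ _ Dnum Dden). lra.
Qed.

Lemma is_derive_continuity_pt (h : R -> R) (x l : R) :
  is_derive h x l -> continuity_pt h x.
Proof.
  intro Hd. apply continuity_pt_filterlim.
  apply (@ex_derive_continuous R_AbsRing R_NormedModule). now exists l.
Qed.

(* Unlike Coquelicot's [MVT_gen], this locates [c] in the open interval. *)
Lemma MVT_open (H dH : R -> R) (u v : R) :
  u < v -> (forall c, u <= c <= v -> continuity_pt H c) ->
  (forall c, u < c < v -> is_derive H c (dH c)) ->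
  exists c, u < c < v /\ H v - H u = dH c * (v - u).
Proof.
  intros Huv Hc Hd.
  pose (pr := fun c (Pc : u < c < v) =>
    exist (derivable_pt_abs H c) (dH c) (proj1 (is_derive_Reals _ _ _) (Hd c Pc))).
  destruct (MVT H id u v pr (fun c _ => derivable_pt_id c) Huv Hc
              (fun c _ => derivable_continuous_pt _ _ (derivable_pt_id c)))
    as [c [Pc E]].
  exists c. split; [exact Pc|]. rewrite derive_pt_id in E. simpl in E.
  unfold id in E. lra.
Qed.

Lemma interior_maximum_critical (phi dphi : R -> R) (u v x0 : R) :
  u < x0 < v -> phi u < phi x0 -> phi v < phi x0 ->
  (forall x, u <= x <= v -> continuity_pt phi x) ->
  (forall x, u < x < v -> is_derive phi x (dphi x)) ->
  exists c, u < c < v /\ dphi c = 0.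
Proof.
  intros Hx0 Hu Hv Hc Hd.
  destruct (continuity_ab_maj phi u v ltac:(lra) Hc) as [M [Hmax HM]].
  assert (HMx0 := Hmax x0 ltac:(lra)).
  assert (HMin : u < M < v).
  { split; apply Rnot_le_lt; intro; [replace M with u in HMx0|replace M with v in HMx0]; lra. }
  exists M. split; [exact HMin|].
  exact (deriv_maximum phi u v M
           (exist _ (dphi M) (proj1 (is_derive_Reals _ _ _) (Hd M HMin)))
           (proj1 HMin) (proj2 HMin)
           (fun x H1 H2 => Hmax x (conj (Rlt_le _ _ H1) (Rlt_le _ _ H2)))).
Qed.

(* Turns one-sided continuity at the endpoints into the two-sided continuity
   required by the interval theorems of the standard library. *)
Lemma exists_continuous_extension (h : R -> R) (a b la lb : R) :
  a < b -> (forall x, a < x < b -> continuity_pt h x) ->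
  filterlim h (at_right a) (locally la) -> filterlim h (at_left b) (locally lb) ->
  exists H, (forall x, continuity_pt H x) /\
    (forall x, a < x < b -> H x = h x) /\ H a = la /\ H b = lb.
Proof.
  intros Hab Hc Ha Hb.
  destruct (C0_extension_lt h la lb a b Hab
              (fun x Hx => proj1 (continuity_pt_filterlim h x) (Hc x Hx)) Ha Hb)
    as [H [HH1 HH2]].
  exists H. split; [|exact HH2].
  intro x. apply continuity_pt_filterlim. apply HH1.
Qed.

Lemma is_derive_ext_open_interval (h H : R -> R) (a b x l : R) :
  a < x < b -> (forall y, a < y < b -> H y = h y) ->
  is_derive h x l -> is_derive H x l.
Proof.
  intros Hx HH Hd. apply (is_derive_ext_loc h); [|exact Hd].
  apply (filter_imp (fun y => a < y /\ y < b)); [intros y Hy; symmetry; now apply HH|].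
  exact (open_and _ _ (open_gt a) (open_lt b) x Hx).
Qed.

Section TangentThroughLeftEndpoint.

Variables (h h1 : R -> R) (a b h2 : R).
Hypothesis Hab : a < b.
Hypothesis Hd : forall x, a < x < b -> is_derive h x (h1 x).
Hypothesis Hra : is_right_derive h a (h1 a).
Hypothesis Hcb : filterlim h (at_left b) (locally (h b)).
Hypothesis H2 : is_right_derive h1 a h2.

Lemma exists_secant_slope_gt_right_derive :
  0 < h2 -> exists x0, a < x0 < b /\ h1 a < secant_slope h a x0.
Proof.
  intro Hh2.
  destruct (filterlim_eventually_pos _ _ (is_right_derive_secant_slope _ _ _ H2) Hh2)
    as [d Hincr].
  pose (x0 := a + Rmin d (b - a) / 2).
  assert (Hd1 := Rmin_l d (b - a)). assert (Hd2 := Rmin_r d (b - a)).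
  assert (Hd3 : 0 < Rmin d (b - a)) by (apply Rmin_glb_lt; [apply cond_pos|lra]).
  assert (Hx0 : a < x0 < b) by (unfold x0; lra).
  destruct (exists_continuous_extension h a b (h a) (h b) Hab
              (fun x Hx => is_derive_continuity_pt _ _ _ (Hd x Hx))
              (is_right_derive_continuous _ _ _ Hra) Hcb) as [H [HC [HH [Ha _]]]].
  destruct (MVT_open H h1 a x0) as [c [Hc Hmvt]]; [lra|intros; apply HC| |].
  { intros c Hc. apply (is_derive_ext_open_interval h H a b); [lra|exact HH|apply Hd; lra]. }
  exists x0. split; [exact Hx0|].
  assert (Hslope : 0 < secant_slope h1 a c).
  { apply Hincr; [|lra]. change (Rabs (c - a) < d).
    unfold x0 in Hc. rewrite Rabs_pos_eq; lra. }
  assert (Hgrow : h1 a < h1 c).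
  { unfold secant_slope in Hslope.
    replace (h1 c) with (h1 a + (h1 c - h1 a) / (c - a) * (c - a)) by (field; lra).
    assert (0 < (h1 c - h1 a) / (c - a) * (c - a)) by (apply Rmult_lt_0_compat; lra).
    lra. }
  unfold secant_slope. rewrite HH, Ha in Hmvt by exact Hx0.
  replace ((h x0 - h a) / (x0 - a)) with (h1 c) by (rewrite Hmvt; field; lra).
  exact Hgrow.
Qed.

Lemma exists_tangent_through_left_endpoint :
  0 < h1 a -> 0 < h2 -> h a = h b ->
  exists c, a < c < b /\ h1 c = secant_slope h a c.
Proof.
  intros Hh1 Hh2 Heq.
  destruct (exists_secant_slope_gt_right_derive Hh2) as [x0 [Hx0 Hgt]].
  destruct (exists_continuous_extension
              (secant_slope h a) a b (h1 a) (secant_slope h a b) Hab) as [S [HC [HS [Sa Sb]]]].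
  - intros x Hx. eapply is_derive_continuity_pt.
    apply is_derive_secant_slope; [lra|apply Hd, Hx].
  - now apply is_right_derive_secant_slope.
  - apply (filterlim_secant_slope (at_left b)); [lra| |exact Hcb].
    intros P HP. now apply filter_le_within.
  - assert (Hb0 : secant_slope h a b = 0)
      by (unfold secant_slope; rewrite Heq; unfold Rdiv; ring).
    destruct (interior_maximum_critical S
                (fun x => (h1 x - secant_slope h a x) / (x - a)) a b x0)
      as [c [Hc Hcrit]];
      [exact Hx0|rewrite Sa, HS; lra|rewrite Sb, HS; lra|intros; apply HC|..].
    + intros x Hx.
      apply (is_derive_ext_open_interval (secant_slope h a) S a b); [exact Hx|exact HS|].
      apply is_derive_secant_slope; [lra|apply Hd, Hx].
    + exists c. split; [exact Hc|].
      apply Rminus_diag_uniq. replace (h1 c - secant_slope h a c)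
        with ((h1 c - secant_slope h a c) / (c - a) * (c - a)) by (field; lra).
      rewrite Hcrit. ring.
Qed.

End TangentThroughLeftEndpoint.

Section LinearCombination.

Variables (f g : R -> R) (s k : R).

Lemma filterlim_diff_quot_lincomb (F : (R -> Prop) -> Prop) {FF : Filter F} (x lf lg : R) :
  filterlim (fun t => (f (x + t) - f x) / t) F (locally lf) ->
  filterlim (fun t => (g (x + t) - g x) / t) F (locally lg) ->
  filterlim (fun t => (s * (f (x + t) - k * g (x + t)) - s * (f x - k * g x)) / t)
    F (locally (s * (lf - k * lg))).
Proof.
  intros Hf Hg. eapply filterlim_ext; [|exact (filterlim_Rlincomb _ _ _ _ s k Hf Hg)].
  intro t. unfold Rdiv. ring.
Qed.

Lemma is_right_derive_lincomb (x lf lg : R) :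
  is_right_derive f x lf -> is_right_derive g x lg ->
  is_right_derive (fun z => s * (f z - k * g z)) x (s * (lf - k * lg)).
Proof. exact (filterlim_diff_quot_lincomb (at_right 0) x lf lg). Qed.

Lemma is_left_derive_lincomb (x lf lg : R) :
  is_left_derive f x lf -> is_left_derive g x lg ->
  is_left_derive (fun z => s * (f z - k * g z)) x (s * (lf - k * lg)).
Proof. exact (filterlim_diff_quot_lincomb (at_left 0) x lf lg). Qed.

Lemma is_derive_lincomb (x lf lg : R) :
  is_derive f x lf -> is_derive g x lg ->
  is_derive (fun z => s * (f z - k * g z)) x (s * (lf - k * lg)).
Proof.
  intros Hf Hg. apply is_derive_scal.
  apply (@is_derive_minus R_AbsRing R_NormedModule); [exact Hf|].
  now apply is_derive_scal.
Qed.

End LinearCombination.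

Theorem mainTheorem4 (a b : R) (f g f1 g1 : R -> R) (f2a g2a : R) :
  a < b ->
  derive_on_closed f f1 a b ->
  derive_on_closed g g1 a b ->
  is_right_derive f1 a f2a ->
  is_right_derive g1 a g2a ->
  g a <> g b ->
  let K := (f b - f a) / (g b - g a) in
  (f1 a - K * g1 a) * (f2a - K * g2a) > 0 ->
  exists eta, a < eta < b /\
    f1 eta - (f eta - f a) / (eta - a) =
    K * (g1 eta - (g eta - g a) / (eta - a)).
Proof.
  intros Hab [Fi [Fa Fb]] [Gi [Ga Gb]] F2 G2 Hne K Hpos.
  pose (s := f1 a - K * g1 a).
  assert (Hs : s <> 0) by (intro E; unfold s in E; rewrite E in Hpos; lra).
  destruct (exists_tangent_through_left_endpoint
              (fun z => s * (f z - K * g z)) (fun z => s * (f1 z - K * g1 z))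
              a b (s * (f2a - K * g2a))) as [c [Hc Hcrit]].
  - exact Hab.
  - intros x Hx. apply is_derive_lincomb; [apply Fi|apply Gi]; exact Hx.
  - now apply is_right_derive_lincomb.
  - apply (is_left_derive_continuous
             (fun z => s * (f z - K * g z)) b (s * (f1 b - K * g1 b))).
    now apply is_left_derive_lincomb.
  - now apply is_right_derive_lincomb.
  - exact (Rsqr_pos_lt s Hs).
  - exact Hpos.
  - unfold K. field. intro E. apply Hne. lra.
  - exists c. split; [exact Hc|].
    assert (E : f1 c - K * g1 c = (f c - f a) / (c - a) - K * ((g c - g a) / (c - a))).
    { apply (Rmult_eq_reg_l s); [|exact Hs].
      rewrite Hcrit. unfold secant_slope. field. lra. }
    lra.
Qed.
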